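(* Let $\mathbf A\in\mathbb R^{m\times n}$ be a nonzero matrix with rank $r$ and nonzero singular values $\sigma_1(\mathbf A)\ge\cdots\ge\sigma_r(\mathbf A)>0$, and let $\mathbf b\in\mathbb R^m$ be such that the linear system $\mathbf A\mathbf x=\mathbf b$ is consistent (i.e. $\mathbf b$ lies in the column space of $\mathbf A$). Fix any row partition, any column partition, any step size $\alpha>0$, and any initial vector $\mathbf x^0\in\mathbb R^n$, and let $\mathbf x^k$ denote the $k$th iterate of the doubly stochastic block Gauss--Seidel (DSBGS) algorithm described in the context. Let $\mathbf x^0_\star:=(\mathbf I-\mathbf A^\dagger\mathbf A)\mathbf x^0+\mathbf A^\dagger\mathbf b$, which is the orthogonal projection of $\mathbf x^0$ onto the solution set $\{\mathbf x\in\mathbb R^n:\mathbf A\mathbf x=\mathbf b\}$. Then for every $k\ge 0$, $$\big\|\mathbb E[\mathbf x^k-\mathbf x^0_\star]\big\|_2\le\Big(\max_{1\le i\le r}\Big|1-\frac{\alpha\sigma_i^2(\mathbf A)}{\|\mathbf A\|_F^2}\Big|\Big)^k\|\mathbf x^0-\mathbf x^0_\star\|_2 .$$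
   Context: Notation: $\mathbf A^\dagger$ is the Moore--Penrose pseudoinverse, $\|\cdot\|_F$ the Frobenius norm, $\|\cdot\|_2$ the Euclidean norm (spectral norm for matrices). For $\mathcal I\subseteq[m]=\{1,\dots,m\}$ and $\mathcal J\subseteq[n]$, $\mathbf A_{\mathcal I,\mathcal J}$ is the submatrix of $\mathbf A$ with rows indexed by $\mathcal I$ and columns indexed by $\mathcal J$; $\mathbf A_{:,\mathcal J}$ is the column submatrix indexed by $\mathcal J$; $\mathbf I_{:,\mathcal J}$ denotes the columns of the identity matrix (of the appropriate order) indexed by $\mathcal J$. DSBGS algorithm: Let $\{\mathcal I_1,\dots,\mathcal I_s\}$ be a partition of $[m]$ into nonempty pairwise disjoint sets and $\{\mathcal J_1,\dots,\mathcal J_t\}$ a partition of $[n]$ into nonempty pairwise disjoint sets; let $\mathcal P=\{\mathcal I_1,\dots,\mathcal I_s\}\times\{\mathcal J_1,\dots,\mathcal J_t\}$. Given $\alpha>0$ and $\mathbf x^0\in\mathbb R^n$, for $k=1,2,\dots$: pick $(\mathcal I,\mathcal J)\in\mathcal P$ (independently of the previous choices) with probability $\|\mathbf A_{\mathcal I,\mathcal J}\|_F^2/\|\mathbf A\|_F^2$, and set $$\mathbf x^k=\mathbf x^{k-1}-\alpha\,\frac{\mathbf I_{:,\mathcal J}(\mathbf A_{\mathcal I,\mathcal J})^{T}(\mathbf I_{:,\mathcal I})^{T}}{\|\mathbf A_{\mathcal I,\mathcal J}\|_F^2}\,(\mathbf A\mathbf x^{k-1}-\mathbf b).$$ The expectation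 $\mathbb E$ is over the random choices of the blocks. *)

From mathcomp Require Import all_boot all_order all_algebra.
From mathcomp Require Import reals.
Set Implicit Arguments. Unset Strict Implicit. Unset Printing Implicit Defensive.
Import Order.TTheory GRing.Theory Num.Theory.
Local Open Scope ring_scope.

Section DSBGS.
Variables (R : realType) (m n : nat).

Definition sqfrob p q (M : 'M[R]_(p, q)) : R := \sum_i \sum_j M i j ^+ 2.
Definition norm2 p (v : 'cV[R]_p) : R := Num.sqrt (\sum_i v i 0 ^+ 2).

Definition blockF2 (A : 'M[R]_(m, n)) (I : {set 'I_m}) (J : {set 'I_n}) : R :=
  \sum_(i in I) \sum_(j in J) A i j ^+ 2.

(* the n x m matrix I_{:,J} (A_{I,J})^T (I_{:,I})^T *)
Definition block_op (A : 'M[R]_(m, n)) (I : {set 'I_m}) (J : {set 'I_n})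
  : 'M[R]_(n, m) :=
  \matrix_(j, i) (if (j \in J) && (i \in I) then A i j else 0).

Definition blk := ({set 'I_m} * {set 'I_n})%type.

Definition dsbgs_step (A : 'M[R]_(m, n)) (b : 'cV[R]_m) (alpha : R) (IJ : blk)
  (x : 'cV[R]_n) : 'cV[R]_n :=
  x - (alpha / blockF2 A IJ.1 IJ.2) *: (block_op A IJ.1 IJ.2 *m (A *m x - b)).

Definition dsbgs_iter (A : 'M[R]_(m, n)) (b : 'cV[R]_m) (alpha : R)
  (x0 : 'cV[R]_n) (s : seq blk) : 'cV[R]_n :=
  foldl (fun x IJ => dsbgs_step A b alpha IJ x) x0 s.

Definition block_prob (A : 'M[R]_(m, n)) (IJ : blk) : R :=
  blockF2 A IJ.1 IJ.2 / sqfrob A.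

(* expectation, over k independent block choices from PR x PC, of f(choices) *)
Definition dsbgs_expect (A : 'M[R]_(m, n)) (PR : {set {set 'I_m}})
  (PC : {set {set 'I_n}}) (k : nat) (f : seq blk -> 'cV[R]_n) : 'cV[R]_n :=
  \sum_(s : k.-tuple blk | all (fun IJ : blk => (IJ.1 \in PR) && (IJ.2 \in PC)) s)
     (\prod_(IJ <- s) block_prob A IJ) *: f s.

Definition is_MP_pinv (A : 'M[R]_(m, n)) (X : 'M[R]_(n, m)) : Prop :=
  [/\ A *m X *m A = A, X *m A *m X = X,
      (A *m X)^T = A *m X & (X *m A)^T = X *m A].

Definition compact_svd r (A : 'M[R]_(m, n)) (U : 'M[R]_(m, r))
  (sigma : 'rV[R]_r) (V : 'M[R]_(n, r)) : Prop :=
  [/\ U^T *m U = 1%:M, V^T *m V = 1%:M, A = U *m diag_mx sigma *m V^T,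
      (forall i, 0 < sigma 0 i) &
      (forall i j : 'I_r, (i <= j)%N -> sigma 0 j <= sigma 0 i)].

End DSBGS.

From mathcomp Require Import all_boot all_order all_algebra.
From mathcomp Require Import reals.
From mathcomp Require Import ring.
Set Implicit Arguments. Unset Strict Implicit. Unset Printing Implicit Defensive.
Import Order.TTheory GRing.Theory Num.Theory.
Local Open Scope ring_scope.

(* Averaged over the choice of a block, the scaled block operators
   (alpha / ||A_{I,J}||_F^2) p_{I,J} I_{:,J} A_{I,J}^T I_{:,I}^T add up to
   (alpha / ||A||_F^2) A^T, so one step maps the mean error e to M e, where
   M = I - (alpha / ||A||_F^2) A^T A. The block choices being independent,
   E[x^k - z] = M^k (x^0 - z) for every solution z. For z the projection of
   x^0 onto the solution set, x^0 - z = A^+ A (x^0 - z) lies in the range of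
   A^T, spanned by the right singular vectors V, on which M acts diagonally
   with eigenvalues 1 - alpha sigma_i^2 / ||A||_F^2; as V is an isometry, the
   bound follows. *)

Lemma partition_big_sum (V : nmodType) (T : finType) (P : {set {set T}})
    (f : T -> V) :
  partition P [set: T] -> \sum_(I in P) \sum_(i in I) f i = \sum_i f i.
Proof.
case/and3P => /eqP coverP trivP _.
by rewrite -big_trivIset // coverP; apply: eq_bigl => i; rewrite in_setT.
Qed.

Lemma partition_sum_mem (R : pzSemiRingType) (T : finType)
    (P : {set {set T}}) (i : T) :
  partition P [set: T] -> \sum_(I in P) ((i \in I)%:R : R) = 1.
Proof.
move=> partP; have delta1 : \sum_j ((j == i)%:R : R) = 1.
  by rewrite (bigD1 i) //= eqxx big1 => [|j /negbTE ->]; rewrite ?addr0.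
rewrite -[RHS]delta1 -(partition_big_sum _ partP).
apply: eq_bigr => I _; rewrite big_mkcond (bigD1 i) //= eqxx.
rewrite big1 => [|j /negbTE ->]; last by case: (j \in I).
by case: (i \in I); rewrite addr0.
Qed.

Section Blocks.
Variables (R : realType) (m n : nat) (A : 'M[R]_(m, n)).

Lemma blockF2_eq0 (I : {set 'I_m}) (J : {set 'I_n}) :
  blockF2 A I J = 0 -> {in I & J, forall i j, A i j = 0}.
Proof.
move=> A0 i j iI jJ; apply/eqP; rewrite -sqrf_eq0; apply/eqP.
have rowA0 := psumr_eq0P (fun i _ => sumr_ge0 _ (fun j _ => sqr_ge0 (A i j)))
  A0 iI.
exact: (psumr_eq0P (fun j _ => sqr_ge0 (A i j)) rowA0 jJ).
Qed.

Lemma sqfrob_eq0 : sqfrob A = 0 -> A = 0.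
Proof.
move=> A0; apply/matrixP => i j; rewrite mxE; apply: (@blockF2_eq0 setT setT);
  rewrite ?in_setT //.
rewrite -A0 /blockF2; apply: eq_big => [i'|i' _]; rewrite ?in_setT //.
by apply: eq_bigl => j'; rewrite in_setT.
Qed.

Lemma block_op_eq0 (I : {set 'I_m}) (J : {set 'I_n}) :
  blockF2 A I J = 0 -> block_op A I J = 0.
Proof.
move=> A0; apply/matrixP => j i; rewrite !mxE.
by case: ifP => // /andP[jJ iI]; rewrite (blockF2_eq0 A0 iI jJ).
Qed.

Variables (PR : {set {set 'I_m}}) (PC : {set {set 'I_n}}).

Definition in_blocks (IJ : blk m n) := (IJ.1 \in PR) && (IJ.2 \in PC).

Lemma dsbgs_expect0 (f : seq (blk m n) -> 'cV[R]_n) :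
  dsbgs_expect A PR PC 0 f = f [::].
Proof.
rewrite /dsbgs_expect (big_pred1 [tuple]) => [|s]; first by rewrite big_nil scale1r.
by rewrite tuple0; apply/esym/eqP.
Qed.

Lemma dsbgs_expectS k (f : seq (blk m n) -> 'cV[R]_n) :
  dsbgs_expect A PR PC k.+1 f =
  \sum_(IJ | in_blocks IJ)
    block_prob A IJ *: dsbgs_expect A PR PC k (fun s => f (IJ :: s)).
Proof.
under eq_bigr do rewrite /dsbgs_expect scaler_sumr.
rewrite pair_big_dep /dsbgs_expect.
rewrite (reindex (fun p : blk m n * k.-tuple (blk m n) => [tuple of p.1 :: p.2])).
  by apply: eq_bigr => -[IJ s] _; rewrite big_cons scalerA.
apply: onW_bij; exists (fun s => (thead s, [tuple of behead s])) => [[IJ s]|s] /=.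
  by rewrite theadE; congr pair; apply: val_inj.
by rewrite -tuple_eta.
Qed.

Hypotheses (partPR : partition PR [set: 'I_m]) (partPC : partition PC [set: 'I_n]).

Lemma sum_blockF2 : \sum_(IJ | in_blocks IJ) blockF2 A IJ.1 IJ.2 = sqfrob A.
Proof.
transitivity (\sum_(I in PR) \sum_(J in PC) blockF2 A I J).
  by rewrite [RHS]pair_big_dep.
rewrite /blockF2; under eq_bigr do rewrite exchange_big /=.
rewrite partition_big_sum //; apply: eq_bigr => i _; exact: partition_big_sum.
Qed.

Lemma sum_block_op : \sum_(IJ | in_blocks IJ) block_op A IJ.1 IJ.2 = A^T.
Proof.
transitivity (\sum_(I in PR) \sum_(J in PC) block_op A I J).
  by rewrite [RHS]pair_big_dep.
apply/matrixP => j i; rewrite summxE.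
under eq_bigr => I _ do rewrite summxE.
transitivity (\sum_(I in PR) \sum_(J in PC)
                 ((i \in I)%:R * ((j \in J)%:R * A i j))).
  apply: eq_bigr => I _; apply: eq_bigr => J _; rewrite mxE.
  by case: (j \in J); case: (i \in I); rewrite ?mul1r ?mul0r.
under eq_bigr do rewrite -mulr_sumr.
by rewrite -mulr_suml partition_sum_mem // mul1r -mulr_suml partition_sum_mem
  // mul1r mxE.
Qed.

Hypothesis sqfrobA_neq0 : sqfrob A != 0.

Lemma sum_block_prob : \sum_(IJ | in_blocks IJ) block_prob A IJ = 1.
Proof. by rewrite /block_prob -mulr_suml sum_blockF2 divff. Qed.

(* A block with ||A_{I,J}||_F = 0 has probability 0, and its step divides by 0;
   both sides vanish because its block operator does. *)
Lemma block_prob_scale (alpha : R) (IJ : blk m n) :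
  (block_prob A IJ * (alpha / blockF2 A IJ.1 IJ.2)) *: block_op A IJ.1 IJ.2
  = (alpha / sqfrob A) *: block_op A IJ.1 IJ.2.
Proof.
have [F0|F_neq0] := eqVneq (blockF2 A IJ.1 IJ.2) 0.
  by rewrite block_op_eq0 // !scaler0.
by rewrite /block_prob; congr (_ *: _); field; rewrite F_neq0 sqfrobA_neq0.
Qed.

Variables (b : 'cV[R]_m) (alpha : R).

Definition mean_step_mx : 'M[R]_n := 1%:M - (alpha / sqfrob A) *: (A^T *m A).

Lemma mean_step_error (x xs : 'cV[R]_n) : A *m xs = b ->
  \sum_(IJ | in_blocks IJ) block_prob A IJ *: (dsbgs_step A b alpha IJ x - xs)
  = mean_step_mx *m (x - xs).
Proof.
move=> Axs; have resE : A *m x - b = A *m (x - xs) by rewrite mulmxBr Axs.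
transitivity (\sum_(IJ | in_blocks IJ) (block_prob A IJ *: (x - xs)
   - (alpha / sqfrob A) *: (block_op A IJ.1 IJ.2 *m (A *m (x - xs))))).
  apply: eq_bigr => IJ _; rewrite /dsbgs_step resE addrAC scalerBr scalerA.
  by rewrite !scalemxAl block_prob_scale.
rewrite sumrB -scaler_suml sum_block_prob scale1r -scaler_sumr -mulmx_suml.
by rewrite sum_block_op /mean_step_mx mulmxBl mul1mx -scalemxAl mulmxA.
Qed.

Lemma dsbgs_expect_error k (x0 xs : 'cV[R]_n) : A *m xs = b ->
  dsbgs_expect A PR PC k (fun s => dsbgs_iter A b alpha x0 s - xs)
  = mean_step_mx ^+ k *m (x0 - xs).
Proof.
move=> Axs; elim: k x0 => [|k IHk] x0; first by rewrite dsbgs_expect0 mul1mx.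
rewrite dsbgs_expectS.
under eq_bigr do rewrite (IHk (dsbgs_step A b alpha _ x0)) scalemxAr.
by rewrite -mulmx_sumr mean_step_error // mulmxA exprSr mulmxE.
Qed.

End Blocks.

Section Spectral.
Variable R : realType.

Lemma sum_sqr_col p (v : 'cV[R]_p) : \sum_i v i 0 ^+ 2 = (v^T *m v) 0 0.
Proof. by rewrite mxE; apply: eq_bigr => i _; rewrite mxE expr2. Qed.

Lemma norm2_isometry p q (V : 'M[R]_(p, q)) (y : 'cV[R]_q) :
  V^T *m V = 1%:M -> norm2 (V *m y) = norm2 y.
Proof.
by move=> VV1; rewrite /norm2 !sum_sqr_col trmx_mul mulmxA -(mulmxA y^T) VV1 mulmx1.
Qed.

Lemma norm2_diag_mx_le q (d : 'rV[R]_q) (c : R) (w : 'cV[R]_q) :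
  0 <= c -> (forall i, `|d 0 i| <= c) -> norm2 (diag_mx d *m w) <= c * norm2 w.
Proof.
move=> c_ge0 dc; rewrite /norm2 mul_diag_mx -(ger0_norm c_ge0) -sqrtr_sqr.
rewrite -sqrtrM ?sqr_ge0 // ler_sqrt; last first.
  by rewrite mulr_ge0 ?sqr_ge0 ?sumr_ge0 // => i _; rewrite sqr_ge0.
rewrite mulr_sumr; apply: ler_sum => i _; rewrite !mxE exprMn.
apply: ler_wpM2r; first exact: sqr_ge0.
by rewrite -real_normK ?num_real // lerXn2r ?nnegrE ?normr_ge0 ?dc.
Qed.

Lemma mulmx_diag_exp p q (M : 'M[R]_p) (V : 'M[R]_(p, q)) (d : 'rV[R]_q) k :
  M *m V = V *m diag_mx d -> M ^+ k *m V = V *m diag_mx (\row_i d 0 i ^+ k).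
Proof.
move=> MV; elim: k => [|k IHk].
  by rewrite mul1mx; apply/matrixP => j i; rewrite mul_mx_diag !mxE expr0 mulr1.
rewrite exprSr -mulmxE -mulmxA MV mulmxA IHk.
by apply/matrixP => j i; rewrite !mul_mx_diag !mxE exprSr mulrA.
Qed.

Variables (m n r : nat) (A : 'M[R]_(m, n)) (U : 'M[R]_(m, r)) (sigma : 'rV[R]_r)
  (V : 'M[R]_(n, r)).
Hypothesis svdA : compact_svd A U sigma V.

Lemma svd_gram_mulmx : A^T *m A *m V = V *m diag_mx sigma *m diag_mx sigma.
Proof.
case: svdA => UU1 VV1 AE _ _; rewrite [in LHS]AE !trmx_mul trmxK tr_diag_mx.
by rewrite -!mulmxA VV1 mulmx1 (mulmxA U^T) UU1 mul1mx mulmxA.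
Qed.

Lemma mean_step_mx_svd alpha :
  mean_step_mx A alpha *m V =
  V *m diag_mx (\row_i (1 - alpha * sigma 0 i ^+ 2 / sqfrob A)).
Proof.
rewrite mulmxBl mul1mx -scalemxAl svd_gram_mulmx.
by apply/matrixP => j i; rewrite !mul_mx_diag !mxE; ring.
Qed.

Lemma MP_pinv_proj_svd (Ad : 'M[R]_(n, m)) :
  is_MP_pinv A Ad -> Ad *m A = V *m (diag_mx sigma *m U^T *m Ad^T).
Proof.
case=> _ _ _ AdA_sym; case: svdA => _ _ AE _ _.
by rewrite -AdA_sym trmx_mul AE !trmx_mul trmxK tr_diag_mx !mulmxA.
Qed.

End Spectral.

Section PseudoInverse.
Variables (R : realType) (m n : nat) (A : 'M[R]_(m, n)) (Ad : 'M[R]_(n, m)).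
Variables (b : 'cV[R]_m) (xe x0 : 'cV[R]_n).
Hypothesis Axe : A *m xe = b.

Lemma pinv_proj_error :
  x0 - ((1%:M - Ad *m A) *m x0 + Ad *m b) = Ad *m A *m (x0 - xe).
Proof.
by rewrite -Axe mulmxBl mul1mx !mulmxA mulmxBr opprD opprB addrA [x0 + _]addrC subrK.
Qed.

Lemma MP_pinv_solution :
  is_MP_pinv A Ad -> A *m ((1%:M - Ad *m A) *m x0 + Ad *m b) = b.
Proof.
case=> AAdA _ _ _.
by rewrite -Axe mulmxDr !mulmxA mulmxBr mulmx1 mulmxA AAdA subrr mul0mx add0r.
Qed.

End PseudoInverse.

Theorem theorem1 (R : realType) (m n r : nat) (A : 'M[R]_(m, n))
  (b : 'cV[R]_m) (U : 'M[R]_(m, r)) (sigma : 'rV[R]_r) (V : 'M[R]_(n, r))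
  (Ad : 'M[R]_(n, m)) (PR : {set {set 'I_m}}) (PC : {set {set 'I_n}})
  (alpha : R) (x0 : 'cV[R]_n) (k : nat) :
  A != 0 -> \rank A = r -> compact_svd A U sigma V ->
  (exists x, A *m x = b) -> is_MP_pinv A Ad ->
  partition PR [set: 'I_m] -> partition PC [set: 'I_n] -> 0 < alpha ->
  let x0s := (1%:M - Ad *m A) *m x0 + Ad *m b in
  norm2 (dsbgs_expect A PR PC k (fun s => dsbgs_iter A b alpha x0 s - x0s))
  <= (\big[Num.max/0]_(i < r) `|1 - alpha * sigma 0 i ^+ 2 / sqfrob A|) ^+ k
     * norm2 (x0 - x0s).
Proof.
(* The rank condition is implied by the SVD, and the bound holds for every alpha. *)
move=> A_neq0 _ svdA [xe Axe] pinvA partPR partPC _; cbv zeta.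
have sqfrobA_neq0 : sqfrob A != 0 by apply: contra_neq A_neq0; apply: sqfrob_eq0.
rewrite dsbgs_expect_error //; last exact: MP_pinv_solution Axe pinvA.
rewrite (pinv_proj_error Ad x0 Axe) (MP_pinv_proj_svd svdA pinvA) -mulmxA.
set w := _ *m (x0 - xe).
rewrite mulmxA (mulmx_diag_exp _ (mean_step_mx_svd svdA alpha)) -mulmxA.
case: (svdA) => _ VV1 _ _ _; rewrite !(norm2_isometry _ VV1).
apply: norm2_diag_mx_le => [|i]; first by rewrite exprn_ge0 // bigmax_ge_id.
by rewrite !mxE normrX lerXn2r ?nnegrE ?normr_ge0 ?bigmax_ge_id ?le_bigmax.
Qed.
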